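(* Let $a,b,c$ be pairwise coprime positive integers and let $G$ be an $(a,b,c)$-group with $(a,b,c)$-generators $x,y$, i.e. $G$ is a finite group generated by $x,y$ with $\operatorname{ord}(x)=a$, $\operatorname{ord}(y)=b$ and $\operatorname{ord}(xy)=c$. Then the Veech group of the regular origami $(G,y,x)$ is a totally non-congruence group.
   Context: A regular origami $(G,u,v)$ is given by a finite group $G$ generated by two elements $u,v$: it is the translation surface obtained from unit squares indexed by the elements $g\in G$, where the right edge of square $g$ is glued to the left edge of square $gu$ and the top edge of square $g$ is glued to the bottom edge of square $gv$. Two regular origamis $(G,u,v)$, $(G',u',v')$ are identified if there is a group isomorphism $G\to G'$ with $u\mapsto u'$, $v\mapsto v'$. The group $\mathrm{SL}(2,\mathbb{Z})$ acts on regular origamis via $S\cdot(G,u,v)=(G,v^{-1},u)$ and $T\cdot(G,u,v)=(G,u,vu^{-1})$, where $S=\begin{pmatrix}0&-1\\1&0\end{pmatrix}$, $T=\begin{pmatrix}1&1\\0&1\end{pmatrix}$. The Veech group of a regular origami is its stabilizer under this action, a finite index subgroup of $\mathrm{SL}(2,\mathbb{Z})$. A finite index subgroup $\Gamma\le\mathrm{SL}(2,\mathbb{Z})$ is a totally non-congruence group if for every integer $n\ge1$ the reduction map $\mathrm{SL}(2,\mathbb{Z})\to\mathrm{SL}(2,\mathbb{Z}/n\mathbb{Z})$ restricted to $\Gamma$ is surjective. *)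

From HB Require Import structures.
From mathcomp Require Import all_boot all_order all_algebra all_fingroup.
Set Implicit Arguments. Unset Strict Implicit. Unset Printing Implicit Defensive.
Import GRing.Theory.
Local Open Scope ring_scope.

Definition Smx : 'M[int]_2 :=
  \matrix_(i < 2, j < 2)
    (if (i == 0 :> nat) then (if (j == 0 :> nat) then 0 else -1)
     else (if (j == 0 :> nat) then 1 else 0)).
Definition Tmx : 'M[int]_2 :=
  \matrix_(i < 2, j < 2)
    (if (i == 0 :> nat) then 1 else (if (j == 0 :> nat) then 0 else 1)).

(* A word in S (true) and T (false); it represents the product of the letters
   in order.  Since S^4 = 1 and T^-1 = S T S T S^3, every element of SL(2,Z)
   is represented by such a word. *)
Definition mat_word (w : seq bool) : 'M[int]_2 :=
  foldr (fun b M => (if b then Smx else Tmx) *m M) 1%:M w.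

Local Open Scope group_scope.

(* Action on generating pairs (u,v) of a regular origami (G,u,v):
   S.(G,u,v) = (G, v^-1, u),  T.(G,u,v) = (G, u, v u^-1). *)
Definition act_S (gT : finGroupType) (p : gT * gT) : gT * gT := (p.2^-1, p.1).
Definition act_T (gT : finGroupType) (p : gT * gT) : gT * gT := (p.1, p.2 * p.1^-1).

Definition act_word (gT : finGroupType) (w : seq bool) (p : gT * gT) : gT * gT :=
  foldr (fun b q => if b then act_S q else act_T q) p w.

Definition origami_iso (gT : finGroupType) (G : {group gT}) (p q : gT * gT) : Prop :=
  exists f : {morphism G >-> gT}, [/\ isom G G f, f p.1 = q.1 & f p.2 = q.2].

Definition in_veech (gT : finGroupType) (G : {group gT}) (u v : gT)
    (A : 'M[int]_2) : Prop :=
  exists w : seq bool, mat_word w = A /\ origami_iso G (act_word w (u, v)) (u, v).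

Local Close Scope group_scope.

(* Gamma (a subset of SL(2,Z)) is totally non-congruence: for every n >= 1 the
   reduction SL(2,Z) -> SL(2,Z/nZ) restricted to Gamma is surjective, i.e. every
   integer matrix B with det B = 1 mod n is congruent mod n to some A in Gamma. *)
Definition totally_noncongruence (Gamma : 'M[int]_2 -> Prop) : Prop :=
  forall n : nat, (0 < n)%N ->
  forall B : 'M[int]_2, (\det B = 1 %[mod n%:Z])%Z ->
  exists A : 'M[int]_2, Gamma A /\ forall i j, (A i j = B i j %[mod n%:Z])%Z.

(* Fix a modulus N >= 2.  It suffices that every matrix of determinant 1 over
   Z/NZ is the reduction of the matrix of a word in S, T which fixes the pair
   (y, x) exactly.  Such reductions form a submonoid of M_2(Z/NZ) containing
   the reductions U(b), L(-a), U(1) L(-c) U(-1) of the words T^b, S^3 T^a S and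
   T S^3 T^c S T^(b-1) (which fix (y, x) as y^b = x^a = (xy)^c = 1). *)
From HB Require Import structures.
From mathcomp Require Import all_boot all_order all_algebra all_fingroup.
From mathcomp Require Import ring zify.
Set Implicit Arguments. Unset Strict Implicit. Unset Printing Implicit Defensive.
Import GRing.Theory.
Local Open Scope ring_scope.

Section TwoByTwo.
Variable R : comNzRingType.

Definition mk2 (p q r s : R) : 'M[R]_2 :=
  \matrix_(i < 2, j < 2)
    (if (i == 0 :> nat) then (if (j == 0 :> nat) then p else q)
     else (if (j == 0 :> nat) then r else s)).

Lemma mx2E (M : 'M[R]_2) : M = mk2 (M 0 0) (M 0 1) (M 1 0) (M 1 1).
Proof.
apply/matrixP => i j; rewrite !mxE.
by case: i => [[|[|//]] ?]; case: j => [[|[|//]] ?] /=; congr (M _ _); apply: val_inj.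
Qed.

Lemma mk2M p q r s p' q' r' s' :
  mk2 p q r s *m mk2 p' q' r' s' =
  mk2 (p * p' + q * r') (p * q' + q * s') (r * p' + s * r') (r * q' + s * s').
Proof.
apply/matrixP => i j; rewrite !mxE !big_ord_recl big_ord0 addr0 !mxE /=.
by case: i => [[|[|//]] ?]; case: j => [[|[|//]] ?].
Qed.

Lemma mk2_1 : (1%:M : 'M[R]_2) = mk2 1 0 0 1.
Proof.
apply/matrixP => i j; rewrite !mxE.
by case: i => [[|[|//]] ?]; case: j => [[|[|//]] ?].
Qed.

Lemma det_mk2 p q r s : \det (mk2 p q r s) = p * s - q * r.
Proof.
rewrite (expand_det_row _ 0) !big_ord_recl big_ord0 addr0 /cofactor !det_mx11 !mxE /=.
rewrite expr0 expr1 mul1r; ring.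
Qed.

Definition Um (t : R) := mk2 1 t 0 1.
Definition Lm (t : R) := mk2 1 0 t 1.
Definition Wm (t : R) := Um 1 *m Lm t *m Um (-1).

Lemma UmD s t : Um s *m Um t = Um (s + t).
Proof. by rewrite /Um mk2M; congr mk2; ring. Qed.

Lemma LmD s t : Lm s *m Lm t = Lm (s + t).
Proof. by rewrite /Lm mk2M; congr mk2; ring. Qed.

Lemma Um0 : Um 0 = 1%:M.
Proof. by rewrite mk2_1. Qed.

Lemma Lm0 : Lm 0 = 1%:M.
Proof. by rewrite mk2_1. Qed.

Lemma WmD s t : Wm s *m Wm t = Wm (s + t).
Proof.
rewrite /Wm -!mulmxA (mulmxA (Um (-1))) UmD addNr Um0 mul1mx.
by rewrite (mulmxA (Lm s)) LmD.
Qed.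

Lemma Wm0 : Wm 0 = 1%:M.
Proof. by rewrite /Wm Lm0 mulmx1 UmD subrr Um0. Qed.

Lemma Lm_conj t : Lm t = Um (-1) *m Wm t *m Um 1.
Proof.
by rewrite /Wm !mulmxA UmD addNr Um0 mul1mx -mulmxA UmD addNr Um0 mulmx1.
Qed.

(* For an idempotent e, U e is a product of L's and W's: this is how U 1 is
   produced from multiples of a, b and c. *)
Lemma Um_idempotent e : e * e = e -> Lm (- e) *m Wm (- e) *m Lm e = Um e.
Proof.
move=> ee; rewrite /Wm /Um /Lm !mk2M; congr mk2.
- by transitivity (1 + (e * e - e) * 1); [ring | rewrite ee subrr mul0r addr0].
- by ring.
- by transitivity (0 + (e * e - e) * (1 - e)); [ring | rewrite ee subrr mul0r addr0].
- by transitivity (1 + (e * e - e) * (-1)); [ring | rewrite ee subrr mul0r addr0].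
Qed.

Lemma mulLm p q r s t : mk2 p q r s *m Lm t = mk2 (p + q * t) q (r + s * t) s.
Proof. by rewrite /Lm mk2M; congr mk2; ring. Qed.

Lemma mulUm p q r s t : mk2 p q r s *m Um t = mk2 p (p * t + q) r (r * t + s).
Proof. by rewrite /Um mk2M; congr mk2; ring. Qed.

Lemma lower_triangular_decomp p r s : p * s = 1 ->
  mk2 p 0 r s = Lm (r * s) *m Um p *m Lm (- s) *m Um p *m Um (-1) *m Lm 1 *m Um (-1).
Proof.
move=> ps1; rewrite /Um /Lm !mk2M; congr mk2; symmetry.
- by transitivity (p + (p * s - 1) * (- p)); [ring | rewrite ps1 subrr mul0r addr0].
- by transitivity (0 + (p * s - 1) * 1); [ring | rewrite ps1 subrr mul0r addr0].
- transitivity (r + (p * s - 1) * (- r * (p * s - 1) - 1)); first ring.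
  by rewrite ps1 subrr mul0r addr0.
- by transitivity (s + (p * s - 1) * (r * s)); [ring | rewrite ps1 subrr mul0r addr0].
Qed.

End TwoByTwo.

Section ResidueRing.
Variable m : nat.
Local Notation N := m.+2.
Local Notation Z := 'Z_N.

Lemma natN0 : (N%:R : Z) = 0.
Proof. by rewrite pchar_Zp. Qed.

Lemma intr_mod (z : int) : (z%:~R : Z) = ((z %% N)%Z)%:~R.
Proof.
rewrite {1}(divz_eq z N) rmorphD rmorphM /= -[N%:~R]/(N%:R : Z) natN0.
by rewrite mulr0 add0r.
Qed.

Lemma val_natr (n : nat) : val (n%:R : Z) = (n %% N)%N.
Proof. exact: val_Zp_nat. Qed.

Lemma natr_mod (p q : nat) : (p%:R - q%:R * (p %/ q)%:R : Z) = (p %% q)%:R.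
Proof. by rewrite {1}(divn_eq p q) natrD natrM; ring. Qed.

Lemma intr_eqmod (z z' : int) : (z%:~R : Z) = z'%:~R <-> (z = z' %[mod N])%Z.
Proof.
split; last by move=> h; rewrite intr_mod h -intr_mod.
rewrite intr_mod (intr_mod z').
have N0 : N%:Z != 0 by [].
have := modz_ge0 z N0; have := ltz_mod z N0.
have := modz_ge0 z' N0; have := ltz_mod z' N0.
case: (z %% N)%Z => // k; case: (z' %% N)%Z => // k' /= ltk' _ ltk _.
move=> h; move: (congr1 val h); rewrite /= !val_Zp_nat // !modn_small //.
by move=> ->.
Qed.

Lemma bezout_Zp (d q : nat) : coprime d q -> exists u v : Z, u * d%:R + v * q%:R = 1.
Proof.
move=> cdq; have /coprimezP [[u v] /= uv1] : coprimez d q by rewrite coprimezE.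
exists u%:~R, v%:~R; move: (congr1 (fun z : int => (z%:~R : Z)) uv1).
by rewrite rmorphD !rmorphM.
Qed.

Lemma mult_of_cofactor (d q r : nat) (t : Z) :
  (q * r)%N = N -> coprime d q -> exists s : Z, r%:R * t = d%:R * s.
Proof.
move=> qrN /bezout_Zp [u [v uv1]]; exists (u * r%:R * t).
have qr0 : q%:R * r%:R = 0 :> Z by rewrite -natrM qrN natN0.
transitivity (r%:R * t * (u * d%:R + v * q%:R)); first by rewrite uv1 mulr1.
transitivity (d%:R * (u * r%:R * t) + v * t * (q%:R * r%:R)); first ring.
by rewrite qr0 mulr0 addr0.
Qed.

(* The idempotent splitting Z/NZ along the b-part and b'-part of N. *)
Lemma split_idempotent (a b c : nat) : (0 < a)%N -> (0 < b)%N -> (0 < c)%N ->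
  coprime a b -> coprime b c ->
  exists e : Z, [/\ e * e = e, exists s, e = a%:R * s, exists s, e = c%:R * s
                 & exists s, 1 - e = b%:R * s].
Proof.
move=> a0 b0 c0 cab cbc.
pose q := partn N \pi(b); pose r := partn N \pi(b)^'.
have qrN : (q * r)%N = N by rewrite partnC.
have rqN : (r * q)%N = N by rewrite mulnC.
have coprime_q d : (0 < d)%N -> coprime d b -> coprime d q.
  move=> d0 cdb; rewrite coprime_sym (pnat_coprime (part_pnat _ _)) //.
  by rewrite -coprime_pi' // coprime_sym.
have [u [v uv1]] := bezout_Zp (coprime_partC \pi(b) N N).
have qr0 : q%:R * r%:R = 0 :> Z by rewrite -natrM qrN natN0.
exists (r%:R * v); split.
- transitivity (r%:R * v * (u * q%:R + v * r%:R) - u * v * (q%:R * r%:R)); first ring.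
  by rewrite qr0 mulr0 subr0 uv1 mulr1.
- exact: mult_of_cofactor qrN (coprime_q _ a0 cab).
- by apply: mult_of_cofactor qrN (coprime_q _ c0 _); rewrite coprime_sym.
- have -> : 1 - r%:R * v = q%:R * u.
    by transitivity (u * q%:R + v * r%:R - r%:R * v); [rewrite uv1 | ring].
  by apply: mult_of_cofactor rqN _; exact: pnat_coprime (pnat_pi b0) (part_pnat _ _).
Qed.

End ResidueRing.

Section Generation.
Variable m : nat.
Local Notation N := m.+2.
Local Notation Z := 'Z_N.

Variable P : 'M[Z]_2 -> Prop.
Hypothesis P1 : P 1%:M.
Hypothesis PM : forall A B, P A -> P B -> P (A *m B).

(* A one-parameter subgroup F meets P in an ideal: P (F s) implies
   P (F (s t)), since F (s t) is a power of F s. *)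
Lemma P_multiples (F : Z -> 'M[Z]_2) :
  (forall s t, F s *m F t = F (s + t)) -> F 0 = 1%:M ->
  forall s, P (F s) -> forall t, P (F (s * t)).
Proof.
move=> FD F0 s Ps t.
have -> : s * t = s *+ val t by rewrite -mulr_natr natr_Zp.
elim: (val t) => [|k IH]; first by rewrite mulr0n F0.
by rewrite mulrS -FD; apply: PM.
Qed.

Section Elementary.
Hypothesis PU : forall t, P (Um t).
Hypothesis PL : forall t, P (Lm t).

Lemma P_lower_triangular p r s : p * s = 1 -> P (mk2 p 0 r s).
Proof.
move=> ps1; rewrite (lower_triangular_decomp r ps1).
by do 6 (apply: PM; last by apply: PU || apply: PL); apply: PL.
Qed.

(* Euclidean algorithm on the first row (p, q), by column operations,
   measured by the sum of the representatives of p and q in [0, N). *)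
Lemma P_SL2_bounded k : forall p q r s : Z, p * s - q * r = 1 ->
  (val p + val q < k)%N -> P (mk2 p q r s).
Proof.
elim: k => [//|k IH] p q r s det1 ltk.
have [q0|qn0] := eqVneq (val q) 0%N.
  have -> : q = 0 by apply: val_inj.
  by apply: P_lower_triangular; rewrite -det1 (_ : q = 0) ?mul0r ?subr0 //; apply: val_inj.
have [p0|pn0] := eqVneq (val p) 0%N.
  have {}p0 : p = 0 by apply: val_inj.
  have -> : mk2 p q r s = mk2 q 0 (r + s) (- r) *m (Um 1 *m Lm (-1)).
    by rewrite mulmxA mulUm mulLm p0; congr mk2; ring.
  apply: PM; last exact: PM.
  by apply: P_lower_triangular; rewrite -det1 p0; ring.
have [leqp|ltpq] := leqP (val q) (val p).
  pose k' := (val p %/ val q)%N.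
  have -> : mk2 p q r s = mk2 (p + q * - k'%:R) q (r + s * - k'%:R) s *m Lm k'%:R.
    by rewrite mulLm; congr mk2; ring.
  apply: PM => //; apply: IH; first by rewrite -det1; ring.
  have -> : p + q * - k'%:R = (val p %% val q)%:R by rewrite -natr_mod !natr_Zp; ring.
  have ltm : (val p %% val q < val q)%N by rewrite ltn_pmod // lt0n.
  rewrite val_natr modn_small; last exact: ltn_trans ltm (ltn_ord q).
  by move: ltk ltm leqp; clear; lia.
pose k' := (val q %/ val p)%N.
have -> : mk2 p q r s = mk2 p (p * - k'%:R + q) r (r * - k'%:R + s) *m Um k'%:R.
  by rewrite mulUm; congr mk2; ring.
apply: PM => //; apply: IH; first by rewrite -det1; ring.
have -> : p * - k'%:R + q = (val q %% val p)%:R by rewrite -natr_mod !natr_Zp; ring.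
have ltm : (val q %% val p < val p)%N by rewrite ltn_pmod // lt0n.
rewrite val_natr modn_small; last exact: ltn_trans ltm (ltn_ord p).
by move: ltk ltm ltpq; clear; lia.
Qed.

Lemma P_SL2 (M : 'M[Z]_2) : \det M = 1 -> P M.
Proof.
rewrite (mx2E M) det_mk2 => det1.
exact: (P_SL2_bounded (k := (val (M 0 0) + val (M 0 1)).+1)).
Qed.

End Elementary.

Section Triangle.
Variables a b c : nat.
Hypotheses (a0 : (0 < a)%N) (b0 : (0 < b)%N) (c0 : (0 < c)%N).
Hypotheses (cab : coprime a b) (cbc : coprime b c) (cac : coprime a c).
Hypothesis PUb : forall t, P (Um (b%:R * t)).
Hypothesis PLa : forall t, P (Lm (a%:R * t)).
Hypothesis PWc : forall t, P (Wm (c%:R * t)).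

(* The idempotent e splits U 1 = L(-e) W(-e) L(e) U(1 - e). *)
Lemma P_Um1 : P (Um 1).
Proof.
have [e [ee [sa ea] [sc ec] [sb eb]]] := split_idempotent m a0 b0 c0 cab cbc.
have -> : Um (1 : Z) = Um e *m Um (1 - e) by rewrite UmD addrC subrK.
apply: PM; last by rewrite eb.
rewrite -Um_idempotent //; apply: PM; first apply: PM.
- by rewrite ea -mulrN.
- by rewrite ec -mulrN.
- by rewrite ea.
Qed.

Lemma P_Um t : P (Um t).
Proof. by rewrite -[t]mul1r; apply: (P_multiples (@UmD _) (@Um0 _) P_Um1). Qed.

(* With a u + c v = 1, L t = L(a u t) L(c v t), and L(c v t) is conjugate
   to W(c v t). *)
Lemma P_Lm t : P (Lm t).
Proof.
have [u [v uv1]] := bezout_Zp m cac.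
have -> : t = a%:R * (u * t) + c%:R * (v * t) by rewrite -[t]mul1r -{1}uv1; ring.
rewrite -LmD; apply: PM => //.
rewrite Lm_conj; apply: PM; last exact: P_Um.
by apply: PM; [exact: P_Um | exact: PWc].
Qed.

Lemma P_SL2_triangle (M : 'M[Z]_2) : \det M = 1 -> P M.
Proof. move=> det1; exact: (P_SL2 P_Um P_Lm det1). Qed.

End Triangle.

End Generation.

Lemma mat_word_cat w1 w2 : mat_word (w1 ++ w2) = mat_word w1 *m mat_word w2.
Proof.
elim: w1 => [|l w IH] /=; first by rewrite mul1mx.
by rewrite IH mulmxA.
Qed.

Lemma act_word_cat (gT : finGroupType) w1 w2 (p : gT * gT) :
  act_word (w1 ++ w2) p = act_word w1 (act_word w2 p).
Proof. by rewrite /act_word foldr_cat. Qed.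

Lemma act_Tpow (gT : finGroupType) k (u v : gT) :
  act_word (nseq k false) (u, v) = (u, (v * (u^-1) ^+ k)%g).
Proof.
elim: k => [|k IH] /=; first by rewrite expg0 mulg1.
by rewrite -/(act_word _ _) IH /act_T /= expgSr mulgA.
Qed.

Definition wordL k := [:: true; true; true] ++ nseq k false ++ [:: true].

Lemma act_wordL (gT : finGroupType) k (u v : gT) :
  act_word (wordL k) (u, v) = ((u * v ^+ k)%g, v).
Proof. by rewrite /wordL !act_word_cat /= -/(act_word _ _) act_Tpow /act_S /= !invgK. Qed.

Section Reduction.
Variable m : nat.
Local Notation N := m.+2.
Local Notation Z := 'Z_N.

Definition reduce (A : 'M[int]_2) : 'M[Z]_2 := map_mx (fun z : int => (z%:~R : Z)) A.

Lemma reduceM A B : reduce (A *m B) = reduce A *m reduce B.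
Proof. exact: map_mxM. Qed.

Lemma reduce1 : reduce 1%:M = 1%:M.
Proof. exact: map_mx1. Qed.

Lemma reduceT : reduce Tmx = Um 1.
Proof.
apply/matrixP => i j; rewrite !mxE.
by case: i => [[|[|//]] ?]; case: j => [[|[|//]] ?].
Qed.

Lemma reduceS : reduce Smx = mk2 0 (-1) 1 0.
Proof.
apply/matrixP => i j; rewrite !mxE.
by case: i => [[|[|//]] ?]; case: j => [[|[|//]] ?] //=; rewrite rmorphN.
Qed.

Lemma reduce_Tpow k : reduce (mat_word (nseq k false)) = Um k%:R.
Proof.
elim: k => [|k IH]; first by rewrite reduce1 Um0.
by rewrite /= reduceM reduceT IH UmD mulrS.
Qed.

Lemma reduce_wordL k : reduce (mat_word (wordL k)) = Lm (- k%:R).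
Proof.
rewrite !mat_word_cat !reduceM reduce_Tpow /= reduce1 reduceS !mulmx1 /Um /Lm !mk2M.
by congr mk2; ring.
Qed.

Variables (gT : finGroupType) (x y : gT).

Definition fixing_reduction (M : 'M[Z]_2) : Prop :=
  exists w, act_word w (y, x) = (y, x) /\ reduce (mat_word w) = M.

Lemma fixing_reduction1 : fixing_reduction 1%:M.
Proof. by exists [::]; split => //; rewrite /= reduce1. Qed.

Lemma fixing_reductionM A B :
  fixing_reduction A -> fixing_reduction B -> fixing_reduction (A *m B).
Proof.
move=> [w1 [fix1 <-]] [w2 [fix2 <-]]; exists (w1 ++ w2).
by rewrite act_word_cat fix2 fix1 mat_word_cat reduceM.
Qed.

Variables a b c : nat.
Hypotheses (ox : #[x]%g = a) (oy : #[y]%g = b) (oxy : #[(x * y)%g]%g = c).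

(* T^b fixes (y, x) since y^b = 1. *)
Lemma fixing_Ub t : fixing_reduction (Um (b%:R * t)).
Proof.
apply: (P_multiples fixing_reduction1 fixing_reductionM (@UmD _) (@Um0 _)).
exists (nseq b false); split; last exact: reduce_Tpow.
by rewrite act_Tpow expgVn -oy expg_order invg1 mulg1.
Qed.

(* S^3 T^a S fixes (y, x) since x^a = 1. *)
Lemma fixing_La t : fixing_reduction (Lm (a%:R * t)).
Proof.
rewrite -mulrNN; apply: (P_multiples fixing_reduction1 fixing_reductionM (@LmD _) (@Lm0 _)).
exists (wordL a); split; last exact: reduce_wordL.
by rewrite act_wordL -ox expg_order mulg1.
Qed.

Hypotheses (a0 : (0 < a)%N) (b0 : (0 < b)%N) (c0 : (0 < c)%N).
Hypotheses (cab : coprime a b) (cbc : coprime b c) (cac : coprime a c).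

(* The word T S^3 T^c S T^(b-1) fixes (y, x) since (x y)^c = y^b = 1, and
   reduces to U 1 L (-c) U (b-1), which is W (-c) up to a factor U (-b). *)
Lemma fixing_Wc t : fixing_reduction (Wm (c%:R * t)).
Proof.
rewrite -mulrNN; apply: (P_multiples fixing_reduction1 fixing_reductionM (@WmD _) (@Wm0 _)).
have yb1 : ((y^-1) ^+ b.-1 = y)%g.
  apply: (mulIg (y^-1)%g); rewrite -expgSr prednK // expgVn -oy expg_order.
  by rewrite invg1 mulgV.
have fixW : fixing_reduction (Um 1 *m Lm (- c%:R) *m Um b.-1%:R).
  exists (false :: wordL c ++ nseq b.-1 false); split.
    change (act_T (act_word (wordL c ++ nseq b.-1 false) (y, x)) = (y, x)).
    rewrite act_word_cat act_Tpow yb1 act_wordL -oxy expg_order mulg1.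
    by rewrite /act_T /= mulgK.
  change (reduce (Tmx *m mat_word (wordL c ++ nseq b.-1 false))
          = Um 1 *m Lm (- c%:R) *m Um b.-1%:R).
  by rewrite (mat_word_cat (wordL c)) reduceM reduceT reduceM reduce_wordL reduce_Tpow mulmxA.
have -> : Wm (- c%:R : Z) = Um 1 *m Lm (- c%:R) *m Um b.-1%:R *m Um (b%:R * -1).
  rewrite -mulmxA UmD /Wm; congr (_ *m Um _).
  by rewrite -subn1 natrB //; ring.
exact: fixing_reductionM fixW (fixing_Ub _).
Qed.

Lemma fixing_SL2 (M : 'M[Z]_2) : \det M = 1 -> fixing_reduction M.
Proof.
move=> det1; exact: (P_SL2_triangle fixing_reduction1 fixing_reductionM
  a0 b0 c0 cab cbc cac fixing_Ub fixing_La fixing_Wc det1).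
Qed.

End Reduction.

Lemma origami_iso_refl (gT : finGroupType) (G : {group gT}) (p : gT * gT) :
  origami_iso G p p.
Proof. by exists (idm G); split => //; exact: idm_isom. Qed.

Theorem mainTheorem4 (a b c : nat) (gT : finGroupType) (G : {group gT}) (x y : gT) :
  (0 < a)%N -> (0 < b)%N -> (0 < c)%N ->
  coprime a b -> coprime b c -> coprime a c ->
  G = <<[set x; y]>>%G :> {set gT} ->
  #[x]%g = a -> #[y]%g = b -> #[(x * y)%g]%g = c ->
  totally_noncongruence (in_veech G y x).
Proof.
move=> a0 b0 c0 cab cbc cac _ ox oy oxy [//|[|m]] _ B detB.
  exists 1%:M; split; last by move=> i j; rewrite !modz1.
  by exists [::]; split => //; exact: origami_iso_refl.
have det1 : \det (reduce m B) = 1 by rewrite det_map_mx; exact: (proj2 (intr_eqmod m _ 1) detB).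
have [w [fixw redw]] := fixing_SL2 ox oy oxy a0 b0 c0 cab cbc cac det1.
exists (mat_word w); split; first by exists w; rewrite fixw; split => //; exact: origami_iso_refl.
by move=> i j; apply/intr_eqmod; move/matrixP: redw => /(_ i j); rewrite !mxE.
Qed.
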